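(* Let $k=3$ and $\alpha=(\tfrac13,\tfrac25,\tfrac27)$. Then every $\alpha$-communal triple can be written as the sum of one of $[0,0,0],[6,7,5],[8,10,7],[9,11,8]$ and a nonnegative integer linear combination of $[5,6,4],[7,8,6],[11,14,10]$. The number $f(g)$ of $\alpha$-communal triples with entries summing to $g$ has generating function \[ \sum_{g\ge0}f(g)x^g=\frac{1+x^{18}+x^{25}+x^{28}}{(1-x^{15})(1-x^{21})(1-x^{35})}. \] In particular $f(100)=3$, the triples being $[32,40,28]$, $[33,39,28]$, $[33,40,27]$, and $f(101)=1$, the unique triple being $[33,40,28]$.
   Context: A triple $[g_1,g_2,g_3]$ of integers is $\alpha$-communal if $0\le g_i\le\alpha_i(g_1+g_2+g_3)$ for $i=1,2,3$. *)

From HB Require Import structures.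
From mathcomp Require Import all_boot all_order all_algebra.
Set Implicit Arguments. Unset Strict Implicit. Unset Printing Implicit Defensive.
Import Order.TTheory GRing.Theory Num.Theory.
Local Open Scope ring_scope.

Definition triple := (int * int * int)%type.

Definition t1 (t : triple) : int := t.1.1.
Definition t2 (t : triple) : int := t.1.2.
Definition t3 (t : triple) : int := t.2.

Definition tsum (t : triple) : int := t1 t + t2 t + t3 t.

Definition communal (alpha : rat * rat * rat) (t : triple) : Prop :=
  [/\ 0 <= t1 t /\ (t1 t)%:~R <= alpha.1.1 * (tsum t)%:~R,
      0 <= t2 t /\ (t2 t)%:~R <= alpha.1.2 * (tsum t)%:~R &
      0 <= t3 t /\ (t3 t)%:~R <= alpha.2 * (tsum t)%:~R].

Definition communalb (alpha : rat * rat * rat) (t : triple) : bool :=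
  [&& 0 <= t1 t, (t1 t)%:~R <= alpha.1.1 * (tsum t)%:~R,
      0 <= t2 t, (t2 t)%:~R <= alpha.1.2 * (tsum t)%:~R,
      0 <= t3 t & (t3 t)%:~R <= alpha.2 * (tsum t)%:~R].

Definition alpha0 : rat * rat * rat := (1 / 3, 2 / 5, 2 / 7).

(* f(g) = number of alpha-communal triples with entries summing to g.
   Communal triples have entries in [0, g], so they are exactly counted by
   triples of ordinals in 'I_g.+1. *)
Definition fcount (alpha : rat * rat * rat) (g : nat) : nat :=
  #|[set x : 'I_g.+1 * 'I_g.+1 * 'I_g.+1 |
      communalb alpha ((Posz x.1.1, Posz x.1.2, Posz x.2) : triple)
      && (x.1.1 + x.1.2 + x.2 == g)%N]|.

Definition tadd (s t : triple) : triple := (t1 s + t1 t, t2 s + t2 t, t3 s + t3 t).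
Definition tscale (n : nat) (t : triple) : triple := (t1 t *+ n, t2 t *+ n, t3 t *+ n).

(* With s = a + b + c, an integer triple (a, b, c) is alpha-communal iff
   a, b, c >= 0 and the slacks u = s - 3a, v = 2s - 5b, w = 2s - 7c are
   nonnegative.  Their sum u + v + w = 2(a - c) is even.  The generators
   (5,6,4), (7,8,6), (11,14,10) each raise exactly one of w, v, u by 2 and
   fix the other two, while the bases (0,0,0), (6,7,5), (8,10,7), (9,11,8)
   realise the four parity patterns of (u, v, w) with even sum.  Hence every
   communal triple is, in a unique way, a base plus a nonnegative combination
   of generators ([communal_decomp], [coords_inj]).

   This bijection identifies f(g) with the number of quadruples (j, n1, n2, n3)
   of weight |base j| + 15 n1 + 21 n2 + 35 n3 = g ([fcount_weight]), i.e. with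
   the g-th coefficient of (1 + x^18 + x^25 + x^28) / ((1-x^15)(1-x^21)(1-x^35));
   the series identity is checked on truncated geometric series. *)

From HB Require Import structures.
From mathcomp Require Import all_boot all_order all_algebra.
From mathcomp Require Import zify ring.
Import Order.TTheory GRing.Theory Num.Theory.

Lemma ler_frac_int (R : numFieldType) (x s k m : int) (q : R) :
  (0 < m%:~R :> R)%R -> q = (k%:~R / m%:~R)%R ->
  (x%:~R <= q * s%:~R :> R)%R = (m * x <= k * s)%R.
Proof.
move=> m_gt0 ->; rewrite -(ler_int R) !intrM mulrAC ler_pdivlMr //.
by rewrite mulrC.
Qed.

Lemma communal_tripleE (x y z : int) : communal alpha0 (x, y, z) <->
  (0 <= x)%R /\ (0 <= y)%R /\ (0 <= z)%R /\ (3 * x <= x + y + z)%R /\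
  (5 * y <= 2 * (x + y + z))%R /\ (7 * z <= 2 * (x + y + z))%R.
Proof.
rewrite /communal /alpha0 /tsum /t1 /t2 /t3 /=.
rewrite (@ler_frac_int _ _ _ 1 3) // (@ler_frac_int _ _ _ 2 5) //.
rewrite (@ler_frac_int _ _ _ 2 7) // mul1r.
by split=> [[[? ?] [? ?] [? ?]] | ?]; [| split]; lia.
Qed.

Lemma communalbP (t : triple) : reflect (communal alpha0 t) (communalb alpha0 t).
Proof.
rewrite /communalb; apply: (iffP idP) => [/and5P [? ? ? ? /andP [? ?]] | ] //.
by case=> [[-> ->] [-> ->] [-> ->]].
Qed.

Definition ntriple (p : nat * nat * nat) : triple := (Posz p.1.1, Posz p.1.2, Posz p.2).

Definition nat_communal (p : nat * nat * nat) : bool :=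
  let: (a, b, c) := p in
  [&& 3 * a <= a + b + c, 5 * b <= 2 * (a + b + c) & 7 * c <= 2 * (a + b + c)].

Definition nsum (p : nat * nat * nat) : nat := p.1.1 + p.1.2 + p.2.

Lemma communal_ntriple (p : nat * nat * nat) :
  communal alpha0 (ntriple p) <-> nat_communal p.
Proof. by case: p => [[a b] c]; rewrite communal_tripleE /=; lia. Qed.

Lemma tsum_ntriple (p : nat * nat * nat) : tsum (ntriple p) = Posz (nsum p).
Proof. by rewrite /tsum /t1 /t2 /t3 /nsum /= !PoszD. Qed.

Lemma communal_nat (t : triple) : communal alpha0 t ->
  exists2 p, t = ntriple p & nat_communal p.
Proof.
case: t => [[[a|?] [b|?]] [c|?]] ct; have := ct; rewrite communal_tripleE; try lia.
by exists (a, b, c); rewrite // -communal_ntriple.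
Qed.

Definition base (j : nat) : nat * nat * nat :=
  nth (0, 0, 0) [:: (0, 0, 0); (6, 7, 5); (8, 10, 7); (9, 11, 8)] j.

Definition coords (j n1 n2 n3 : nat) : nat * nat * nat :=
  let: (x, y, z) := base j in
  (x + 5 * n1 + 7 * n2 + 11 * n3, y + 6 * n1 + 8 * n2 + 14 * n3,
   z + 4 * n1 + 6 * n2 + 10 * n3).

Definition weight (j n1 n2 n3 : nat) : nat := nsum (base j) + 15 * n1 + 21 * n2 + 35 * n3.

Lemma nsum_coords j n1 n2 n3 : nsum (coords j n1 n2 n3) = weight j n1 n2 n3.
Proof. by rewrite /coords /weight /nsum; case: (base j) => [[x y] z] /=; lia. Qed.

Lemma coords_communal j n1 n2 n3 : j < 4 -> nat_communal (coords j n1 n2 n3).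
Proof. by case: j => [|[|[|[|]]]] // _; apply/and3P; split; lia. Qed.

Lemma half_parity (u : nat) : exists n p, u = 2 * n + p /\ (p = 0 \/ p = 1).
Proof. by exists (u %/ 2), (u %% 2); lia. Qed.

(* The halves of the slacks w, v, u give n1, n2, n3; their parities give j. *)
Lemma communal_decomp (p : nat * nat * nat) : nat_communal p ->
  exists j n1 n2 n3, j < 4 /\ p = coords j n1 n2 n3.
Proof.
case: p => [[a b] c] /and3P [ha hb hc].
have [n3 [pu [eu [|] pu01]]] := half_parity (a + b + c - 3 * a);
have [n2 [pv [ev [|] pv01]]] := half_parity (2 * (a + b + c) - 5 * b);
have [n1 [pw [ew [|] pw01]]] := half_parity (2 * (a + b + c) - 7 * c);
  subst; try lia (* u + v + w is even *).
- by exists 0, n1, n2, n3; split=> //; congr (_, _, _); lia.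
- by exists 1, n1, n2, n3; split=> //; congr (_, _, _); lia.
- by exists 2, n1, n2, n3; split=> //; congr (_, _, _); lia.
- by exists 3, n1, n2, n3; split=> //; congr (_, _, _); lia.
Qed.

(* The decomposition is unique: the slack parities determine the base. *)
Lemma coords_inj j n1 n2 n3 j' m1 m2 m3 : j < 4 -> j' < 4 ->
  coords j n1 n2 n3 = coords j' m1 m2 m3 -> [/\ j = j', n1 = m1, n2 = m2 & n3 = m3].
Proof.
by case: j => [|[|[|[|]]]] // _; case: j' => [|[|[|[|]]]] // _ [? ? ?]; split; lia.
Qed.

Local Open Scope ring_scope.

Lemma communal_decomposition (t : triple) : communal alpha0 t ->
  exists2 b : triple,
    b \in [:: ((0, 0, 0) : triple); (6, 7, 5); (8, 10, 7); (9, 11, 8)] &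
    exists n1 n2 n3 : nat,
      t = tadd b (tadd (tscale n1 (5, 6, 4))
                      (tadd (tscale n2 (7, 8, 6)) (tscale n3 (11, 14, 10)))).
Proof.
case/communal_nat => p -> /communal_decomp [j [n1 [n2 [n3 [j_lt4 ->]]]]].
exists (ntriple (base j)); first by case: j j_lt4 => [|[|[|[|]]]].
exists n1, n2, n3; rewrite /coords /ntriple /tadd /tscale /t1 /t2 /t3.
by case: (base j) => [[x y] z] /=; congr (_, _, _); lia.
Qed.

Definition otriple (g : nat) := ('I_g.+1 * 'I_g.+1 * 'I_g.+1)%type.
Definition oval {g} (x : otriple g) : nat * nat * nat :=
  (val x.1.1, val x.1.2, val x.2).
Definition oinord g (p : nat * nat * nat) : otriple g :=
  (inord p.1.1, inord p.1.2, inord p.2).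

Lemma oinordK g (x : otriple g) : oinord g (oval x) = x.
Proof. by case: x => [[a b] c]; rewrite /oinord /= !inord_val. Qed.

Lemma ovalK g (p : nat * nat * nat) : (nsum p <= g)%N -> oval (oinord g p) = p.
Proof.
by case: p => [[a b] c]; rewrite /nsum /oval /= => sum_le; rewrite !inordK //; lia.
Qed.

Lemma communalb_ntriple (p : nat * nat * nat) :
  communalb alpha0 (ntriple p) = nat_communal p.
Proof.
by apply/idP/idP => [/communalbP/communal_ntriple | /communal_ntriple/communalbP].
Qed.

Lemma fcount_nat g : fcount alpha0 g =
  #|[set x : otriple g | nat_communal (oval x) && (nsum (oval x) == g)]|.
Proof. by apply: eq_card => x; rewrite !inE -communalb_ntriple. Qed.

Definition index (K : nat) := ('I_4 * 'I_K * 'I_K * 'I_K)%type.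
Definition icoords {K} (x : index K) : nat * nat * nat :=
  coords x.1.1.1 x.1.1.2 x.1.2 x.2.
Definition iweight {K} (x : index K) : nat := weight x.1.1.1 x.1.1.2 x.1.2 x.2.

(* For g <= K the decomposition is a bijection between the communal triples
   summing to g and the indices of weight g. *)
Lemma fcount_weight {g K : nat} : (g <= K)%N ->
  fcount alpha0 g = #|[set x : index K.+1 | iweight x == g]|.
Proof.
move=> g_le_K; rewrite fcount_nat.
pose phi (x : index K.+1) := oinord g (icoords x).
have ovalphi x : iweight x = g -> oval (phi x) = icoords x.
  by move=> wx; apply/ovalK/eq_leq; rewrite /icoords nsum_coords.
have phi_inj : {in [set x | iweight x == g] &, injective phi}.
  move=> [[[j a] b] c] [[[j' a'] b'] c']; rewrite !inE => /eqP wx /eqP wy.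
  move/(congr1 oval); rewrite !ovalphi // /icoords /=.
  by case/coords_inj=> // /ord_inj-> /ord_inj-> /ord_inj-> /ord_inj->.
rewrite -(card_in_imset phi_inj); apply: eq_card => x; rewrite inE.
apply/andP/imsetP => [[cx /eqP sx] | [y]]; last first.
  rewrite inE => /eqP wy ->; rewrite ovalphi // /icoords nsum_coords.
  by split; [apply: coords_communal | apply/eqP].
have [j [n1 [n2 [n3 [j_lt4 p_eq]]]]] := communal_decomp _ cx.
have wg : weight j n1 n2 n3 = g by rewrite -nsum_coords -p_eq.
have [n1_lt n2_lt n3_lt] : [/\ (n1 < K.+1)%N, (n2 < K.+1)%N & (n3 < K.+1)%N].
  by move: wg; rewrite /weight; split; lia.
exists (Ordinal j_lt4, inord n1, inord n2, inord n3).
  by rewrite inE /iweight /= !inordK // wg.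
by rewrite /phi /icoords /= !inordK // -p_eq oinordK.
Qed.

Lemma ntriple_inj : injective ntriple.
Proof. by case=> [[a b] c] [[a' b'] c'] [-> -> ->]. Qed.

Lemma fcount_enum g (s : seq triple) : uniq s ->
  (forall t, communal alpha0 t /\ tsum t = g%:R <-> t \in s) ->
  fcount alpha0 g = size s.
Proof.
move=> s_uniq sE; rewrite fcount_nat.
pose f (x : otriple g) := ntriple (oval x).
have f_inj : injective f.
  by move=> x y /ntriple_inj/(congr1 (oinord g)); rewrite !oinordK.
set A := [set x : otriple g | _]; rewrite -(size_image f A).
apply/perm_size/uniq_perm => //; first by rewrite map_inj_uniq ?enum_uniq.
move=> t; apply/imageP/idP => [[x] | /sE [ct st]].
  rewrite inE => /andP [cx /eqP sx] ->; apply/sE.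
  by rewrite /f communal_ntriple tsum_ntriple sx natz.
have [p ep cp] := communal_nat _ ct.
have sp : nsum p = g by apply/eqP; rewrite -eqz_nat -tsum_ntriple -ep st natz.
by exists (oinord g p); rewrite /f ?inE ovalK ?sp ?cp ?eqxx.
Qed.

Lemma communal_sum100 (t : triple) : communal alpha0 t /\ tsum t = 100 <->
  t \in [:: ((32, 40, 28) : triple); (33, 39, 28); (33, 40, 27)].
Proof.
case: t => [[x y] z]; rewrite communal_tripleE /tsum /t1 /t2 /t3 /= !inE !xpair_eqE.
lia.
Qed.

Lemma communal_sum101 (t : triple) :
  communal alpha0 t /\ tsum t = 101 <-> t = (33, 40, 28).
Proof.
case: t => [[x y] z]; rewrite communal_tripleE /tsum /t1 /t2 /t3 /=.
by split=> [? | [-> -> ->]]; [congr (_, _, _) |]; lia.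
Qed.

Section Truncation.
Context {R : comNzRingType}.

Definition agree_upto (n : nat) (p q : {poly R}) : Prop :=
  forall j, (j <= n)%N -> p`_j = q`_j.

(* Low-degree coefficients of a product only involve low-degree coefficients. *)
Lemma agree_mul {n} {p p' q q' : {poly R}} :
  agree_upto n p p' -> agree_upto n q q' -> agree_upto n (p * q) (p' * q').
Proof.
move=> pp' qq' j j_le; rewrite !coefM; apply: eq_bigr => i _.
by rewrite pp' ?qq' //; have := ltn_ord i; lia.
Qed.

Lemma agree_1subX n d : (n < d)%N -> agree_upto n (1 - 'X^d) 1.
Proof.
move=> n_lt_d j j_le; rewrite coefB coefXn.
have /negPf-> : j != d by apply/eqP; lia.
by rewrite subr0.
Qed.

Definition geom (d K : nat) : {poly R} := \sum_(a < K) 'X^(d * a).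

Lemma geom_telescope d K : (1 - 'X^d) * geom d K = 1 - 'X^(d * K).
Proof.
rewrite /geom; elim: K => [|K IH]; first by rewrite big_ord0 mulr0 muln0 expr0 subrr.
by rewrite big_ord_recr /= mulrDr IH mulnS exprD; ring.
Qed.

End Truncation.

Definition numer : {poly int} := 1 + 'X^18 + 'X^25 + 'X^28.

(* Truncation of 1 / ((1 - x^15)(1 - x^21)(1 - x^35)). *)
Definition denom_inv (K : nat) : {poly int} := geom 15 K * geom 21 K * geom 35 K.

(* The exponents of the numerator are the entry sums of the four bases. *)
Lemma numerE : numer = \sum_(j < 4) 'X^(nsum (base j)).
Proof. by rewrite !big_ord_recl big_ord0 /= expr0 addr0 !addrA. Qed.

(* Expanding the product, each index contributes x^(its weight). *)
Lemma coef_numer_denom_inv K g :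
  (numer * denom_inv K)`_g = #|[set x : index K | iweight x == g]|%:R.
Proof.
have -> : numer * denom_inv K = \sum_(x : index K) 'X^(iweight x).
  rewrite numerE /denom_inv /geom !mulrA.
  rewrite big_distrlr pair_bigA big_distrlr pair_bigA big_distrlr pair_bigA.
  by apply: eq_bigr => -[[[j a] b] c] _ /=; rewrite -!exprD.
rewrite coef_sum -sum1_card natr_sum [RHS]big_mkcond.
by apply: eq_bigr => x _; rewrite coefXn inE eq_sym; case: (iweight x == g).
Qed.

(* Telescoping: the denominator times the truncated inverse is a product of
   factors 1 - x^(dK), which are 1 in degrees below K. *)
Lemma denom_numer_denom_inv K :
  (1 - 'X^15) * (1 - 'X^21) * (1 - 'X^35) * (numer * denom_inv K)
  = numer * ((1 - 'X^(15 * K)) * (1 - 'X^(21 * K)) * (1 - 'X^(35 * K))).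
Proof. by rewrite -!geom_telescope /denom_inv; ring. Qed.

Lemma denom_times_series n (F : {poly int}) :
  agree_upto n F (numer * denom_inv n.+1) ->
  ((1 - 'X^15) * (1 - 'X^21) * (1 - 'X^35) * F)`_n = numer`_n.
Proof.
have agree_refl (p : {poly int}) : agree_upto n p p by [].
move=> F_agree; rewrite (agree_mul (agree_refl _) F_agree) //.
rewrite denom_numer_denom_inv -[numer in RHS]mulr1.
apply: (agree_mul (agree_refl _)) => //.
(* every factor 1 - x^(d (n + 1)) agrees with 1 up to degree n *)
have one3 : 1 = 1 * 1 * 1 :> {poly int} by rewrite !mulr1.
rewrite [X in agree_upto _ _ X]one3.
by apply: agree_mul; [apply: agree_mul|]; apply: agree_1subX; lia.
Qed.

Theorem mainTheorem12 :
  (forall t : triple, communal alpha0 t ->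
     exists2 b : triple,
       b \in [:: ((0, 0, 0) : triple); (6, 7, 5); (8, 10, 7); (9, 11, 8)] &
       exists n1 n2 n3 : nat,
         t = tadd b (tadd (tscale n1 (5, 6, 4))
                         (tadd (tscale n2 (7, 8, 6)) (tscale n3 (11, 14, 10)))))
  /\
  (forall n : nat,
     ((1 - 'X^15) * (1 - 'X^21) * (1 - 'X^35)
        * \poly_(g < n.+1) ((fcount alpha0 g)%:R : int))`_n
     = (1 + 'X^18 + 'X^25 + 'X^28 : {poly int})`_n)
  /\
  (fcount alpha0 100 = 3%N /\
   forall t : triple, (communal alpha0 t /\ tsum t = 100) <->
     t \in [:: ((32, 40, 28) : triple); (33, 39, 28); (33, 40, 27)])
  /\
  (fcount alpha0 101 = 1%N /\
   forall t : triple, (communal alpha0 t /\ tsum t = 101) <->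
     t = (33, 40, 28)).
Proof.
split; first exact: communal_decomposition.
split.
  move=> n; apply: denom_times_series => g g_le_n.
  by rewrite coef_poly ltnS g_le_n coef_numer_denom_inv (fcount_weight g_le_n).
split; first by split; [apply: fcount_enum communal_sum100 | exact: communal_sum100].
split; last exact: communal_sum101.
apply: (@fcount_enum 101 [:: (33, 40, 28)]) => [// | t].
by rewrite mem_seq1; split=> [/communal_sum101-> | /eqP/communal_sum101].
Qed.
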